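(* Let $\mathsf{X}$ be a metric space and $\preceq$ a closed, down-compact partial order on it. Then for all sequences $(x^-_n)$, $(x_n)$, $(x^+_n)$ in $\mathsf{X}$ and $x_\infty\in\mathsf{X}$: if $x^-_n\preceq x_n\preceq x^+_n$ for all $n$, $x^-_n\to x_\infty$ and $x^+_n\to x_\infty$, then $x_n\to x_\infty$.
   Context: A partial order $\preceq$ on a metric space $\mathsf{X}$ is closed if its graph $\{(x,y):x\preceq y\}$ is closed in $\mathsf{X}\times\mathsf{X}$, and down-compact if for every compact $K^+\subset\mathsf{X}$ the set $\{x\in\mathsf{X}:\exists x^+\in K^+,\ x\preceq x^+\}$ is compact. *)

From HB Require Import structures.
From mathcomp Require Import all_boot all_order all_algebra.
From mathcomp Require Import all_classical all_reals all_analysis.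
Set Implicit Arguments. Unset Strict Implicit. Unset Printing Implicit Defensive.
Import Order.TTheory GRing.Theory Num.Theory.
Local Open Scope classical_set_scope.

Definition is_partial_order (T : Type) (le : T -> T -> Prop) : Prop :=
  [/\ (forall x, le x x),
      (forall x y, le x y -> le y x -> x = y) &
      (forall x y z, le x y -> le y z -> le x z)].

Definition order_closed (T : topologicalType) (le : T -> T -> Prop) : Prop :=
  closed [set p : T * T | le p.1 p.2].

Definition down_compact (T : topologicalType) (le : T -> T -> Prop) : Prop :=
  forall K : set T, compact K -> compact [set x | exists2 y, K y & le x y].

From HB Require Import structures.
From mathcomp Require Import all_boot all_order all_algebra.
From mathcomp Require Import all_classical all_reals all_analysis.
Set Implicit Arguments.
Unset Strict Implicit.
Unset Printing Implicit Defensive.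
Import Order.TTheory GRing.Theory Num.Theory.
Local Open Scope classical_set_scope.

(* The x_n lie below the compact set of the x+_n together with x_inf, hence in
   a compact down-set, so x_n converges to x_inf as soon as x_inf is its only
   cluster point.  Along any filter exhibiting a cluster point y of (x_n), the
   sequences x-_n and x+_n still converge to x_inf, and the closed order passes
   x-_n <= x_n <= x+_n to the limit: x_inf <= y <= x_inf. *)

Lemma cvg_compact_range (T : topologicalType) (u : nat -> T) (a : T) :
  u @ \oo --> a -> compact (range u `|` [set a]).
Proof.
move=> ua F PF FK.
have [cla|ncla] := pselect (cluster F a); first by exists a; split => //; right.
(* Otherwise a neighbourhood of [a], containing a tail of [u], is avoided by
   some member of [F]; then [F] contains a finite initial segment of [u]. *)
have [A [B [FA Ba AB0]]] : exists A B, [/\ F A, nbhs a B & ~ (A `&` B !=set0)].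
  apply: contrapT => nAB; apply: ncla => A B FA Ba; apply: contrapT => AB0.
  by apply: nAB; exists A, B.
have [N _ uB] := ua B Ba.
have FI : F (u @` `I_N).
  apply: filterS (filterI FA FK) => x [Ax [[n _ nx]|/= xa]]; subst x.
    have [nN|Nn] := ltnP n N; first by exists n.
    by exfalso; apply: AB0; exists (u n); split => //; exact: uB.
  by exfalso; apply: AB0; exists a; split => //; exact: nbhs_singleton Ba.
have cI : compact (u @` `I_N) by apply/finite_compact/finite_image/finite_II.
have [_ [[n _ <-] cl]] := cI F PF FI.
by exists (u n); split => //; left; exists n.
Qed.

Lemma compact_cluster_cvg (T : topologicalType) (F : set_system T) (K : set T)
    (a : T) : ProperFilter F -> compact K -> F K ->
  cluster F `<=` [set a] -> F --> a.
Proof.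
move=> PF cK FK clFa U Ua; apply: contrapT => nFU.
have PFU : ProperFilter (within (~` U) F).
  apply: Build_ProperFilter; rewrite /within /= => FU0; apply: nFU.
  by apply: filterS FU0 => x nUx0; apply: contrapT => /nUx0.
have FUK : within (~` U) F K by apply: filterS FK => x Kx _.
have [y [_ cly]] := cK _ PFU FUK.
have ya : y = a by apply: clFa; exact: cvg_cluster (cvg_within _) _ cly.
rewrite ya in cly.
by have [x [nUx Ux]] := cly _ _ (withinT _ _) Ua.
Qed.

Lemma cvg_cluster_pair (I : Type) (F : set_system I) (X Y : topologicalType)
    (u : I -> X) (v : I -> Y) (a : X) (b : Y) : Filter F ->
  u @ F --> a -> cluster (v @ F) b ->
  cluster ((fun i => (u i, v i)) @ F) (a, b).
Proof.
move=> FF ua clb A B FA [[P Q] /= [Pa Qb] PQB].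
set S := [set i | A (u i, v i)] `&` u @^-1` P.
have FS : F S by apply: filterI => //; exact: ua.
have vFS : F (v @^-1` (v @` S)) by apply: filterS FS => i Si; exists i.
have [_ [[i [Ai Pui] <-] Qvi]] := clb _ _ vFS Qb.
by exists (u i, v i); split => //; exact: PQB.
Qed.

Lemma order_closed_flip (T : topologicalType) (le : T -> T -> Prop) :
  order_closed le -> order_closed (fun x y => le y x).
Proof.
move=> cle; apply: (@preimage_closed _ _ (fun p : T * T => (p.2, p.1)) _ _ cle).
by move=> p _; exact: swap_continuous.
Qed.

Lemma order_closed_le_cluster (T : topologicalType) (le : T -> T -> Prop)
    (I : Type) (F : set_system I) (u v : I -> T) (a b : T) :
  Filter F -> order_closed le -> (\forall i \near F, le (u i) (v i)) ->
  u @ F --> a -> cluster (v @ F) b -> le a b.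
Proof.
move=> FF cle uv ua clb; apply: (cle (a, b)).
by have := cvg_cluster_pair _ ua clb; rewrite clusterE; apply.
Qed.

Theorem lemma3p14 (R : realType) (X : pseudoMetricType R)
  (hX : hausdorff_space X) (le : X -> X -> Prop)
  (hpo : is_partial_order le) (hcl : order_closed le) (hdc : down_compact le)
  (xm x xp : nat -> X) (xinf : X) :
  (forall n, le (xm n) (x n) /\ le (x n) (xp n)) ->
  xm @ \oo --> xinf -> xp @ \oo --> xinf ->
  x @ \oo --> xinf.
Proof.
move=> hle hxm hxp; have [_ le_anti _] := hpo.
have cD := hdc _ (cvg_compact_range hxp).
apply: (compact_cluster_cvg _ cD).
  apply: (@nearW _ \oo) => n.
  by exists (xp n); [left; exists n | exact: (hle n).2].
move=> y cly; apply: le_anti.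
- apply: order_closed_le_cluster _ (order_closed_flip hcl) _ hxp cly.
  by apply: nearW => n; exact: (hle n).2.
- apply: order_closed_le_cluster _ hcl _ hxm cly.
  by apply: nearW => n; exact: (hle n).1.
Qed.
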